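(* Let $\mathcal{G}=(\mathcal{V},\mathcal{E})$ be an undirected weighted graph with nodes $\mathcal{V}=\{1,\ldots,n\}$, where each edge $\{i,i'\}\in\mathcal{E}$ ($i\neq i'$) carries a weight $A_{i,i'}=A_{i',i}>0$. For each node $i\in\mathcal{V}$ let $L_i:\mathbb{R}^d\to[0,\infty)$ be a non-negative local loss function. Let $\alpha>0$, and let $\{\widehat{\mathbf{w}}^{(i)}\}_{i=1}^n$, with $\widehat{\mathbf{w}}^{(i)}\in\mathbb{R}^d$, be any solution of the GTVMin problem $$\{\widehat{\mathbf{w}}^{(i)}\}_{i=1}^n\in\operatorname*{argmin}_{\mathbf{w}^{(1)},\ldots,\mathbf{w}^{(n)}\in\mathbb{R}^d}\Big[\sum_{i\in\mathcal{V}}L_i(\mathbf{w}^{(i)})+\alpha\sum_{\{i,i'\}\in\mathcal{E}}A_{i,i'}\|\mathbf{w}^{(i)}-\mathbf{w}^{(i')}\|_2^2\Big].$$ Let $\mathcal{C}\subseteq\mathcal{V}$ be a nonempty set of nodes (a cluster) for which there exist a vector $\overline{\mathbf{w}}^{(\mathcal{C})}\in\mathbb{R}^d$ and a number $\varepsilon^{(\mathcal{C})}\ge 0$ with $$\sum_{i\in\mathcal{C}}L_i\big(\overline{\mathbf{w}}^{(\mathcal{C})}\big)\le\varepsilon^{(\mathcal{C})}.$$ Assume $\lambda_2(\mathcal{C})>0$, where $\lambda_2(\mathcal{C})$ is the second smallest eigenvalue of the Laplacian matrix $\mathbf{L}^{(\mathcal{C})}$ of the induced subgraph $\mathcal{G}^{(\mathcal{C})}$.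 Let $R\ge 0$ satisfy $\max_{i\in\mathcal{V}\setminus\mathcal{C}}\|\widehat{\mathbf{w}}^{(i)}\|_2\le R$ (any $R\ge0$ if $\mathcal{C}=\mathcal{V}$). Define, for $i\in\mathcal{C}$, $\widetilde{\mathbf{w}}^{(i)}:=\widehat{\mathbf{w}}^{(i)}-\frac{1}{|\mathcal{C}|}\sum_{i'\in\mathcal{C}}\widehat{\mathbf{w}}^{(i')}$. Then $$\sum_{i\in\mathcal{C}}\|\widetilde{\mathbf{w}}^{(i)}\|_2^2\le\frac{1}{\alpha\,\lambda_2(\mathcal{C})}\Big[\varepsilon^{(\mathcal{C})}+2\alpha\,|\partial\mathcal{C}|\big(\|\overline{\mathbf{w}}^{(\mathcal{C})}\|_2^2+R^2\big)\Big],$$ where $|\partial\mathcal{C}|:=\sum_{\{i,i'\}\in\partial\mathcal{C}}A_{i,i'}$ with $\partial\mathcal{C}:=\{\{i,i'\}\in\mathcal{E}: i\in\mathcal{C},\ i'\notin\mathcal{C}\}$.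
   Context: The induced subgraph $\mathcal{G}^{(\mathcal{C})}$ has node set $\mathcal{C}$ and all edges $\{i,i'\}\in\mathcal{E}$ with $i,i'\in\mathcal{C}$, with the same weights. Its Laplacian is $\mathbf{L}^{(\mathcal{C})}=\mathbf{D}-\mathbf{A}$, where $\mathbf{A}$ is the weighted adjacency matrix of $\mathcal{G}^{(\mathcal{C})}$ (entry $A_{i,i'}$ for edges, $0$ otherwise) and $\mathbf{D}$ is the diagonal matrix of weighted degrees $\sum_{i'\in\mathcal{C}}A_{i,i'}$. The quantity $|\partial\mathcal{C}|$ is called the cluster boundary (total weight of edges leaving $\mathcal{C}$); when $\mathcal{C}=\mathcal{V}$ it equals $0$. *)

From HB Require Import structures.
From mathcomp Require Import all_boot all_order all_algebra.
From mathcomp Require Import reals.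
Set Implicit Arguments. Unset Strict Implicit. Unset Printing Implicit Defensive.
Import Order.TTheory GRing.Theory Num.Theory.
Local Open Scope ring_scope.

Section Defs.
Variable R : realType.

Definition sqnorm (d : nat) (v : 'rV[R]_d) : R := \sum_(k < d) v 0 k ^+ 2.
Definition norm2 (d : nat) (v : 'rV[R]_d) : R := Num.sqrt (sqnorm v).

(* A weighted undirected graph on nodes 'I_n is given by a weight matrix
   A : 'I_n -> 'I_n -> R, symmetric, zero diagonal, nonnegative;
   the edge set is { {i,i'} : A i i' > 0 }. *)
Definition weighted_graph (n : nat) (A : 'I_n -> 'I_n -> R) : Prop :=
  (forall i j, A i j = A j i) /\ (forall i, A i i = 0) /\ (forall i j, 0 <= A i j).

(* GTVMin objective; each undirected edge {i,j} is counted once (i < j). *)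
Definition gtv_objective (n d : nat) (A : 'I_n -> 'I_n -> R)
  (L : 'I_n -> 'rV[R]_d -> R) (alpha : R) (w : 'I_n -> 'rV[R]_d) : R :=
  \sum_(i < n) L i (w i)
  + alpha * \sum_(i < n) \sum_(j < n | (i < j)%N) A i j * sqnorm (w i - w j).

Definition is_gtvmin_solution (n d : nat) (A : 'I_n -> 'I_n -> R)
  (L : 'I_n -> 'rV[R]_d -> R) (alpha : R) (what : 'I_n -> 'rV[R]_d) : Prop :=
  forall w : 'I_n -> 'rV[R]_d,
    gtv_objective A L alpha what <= gtv_objective A L alpha w.

Definition laplacian_induced (n : nat) (A : 'I_n -> 'I_n -> R) (C : {set 'I_n})
  : 'M[R]_#|C| :=
  \matrix_(a, b)
    (if a == b then \sum_(j in C) A (enum_val a) j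
     else - A (enum_val a) (enum_val b)).

(* s is the list of eigenvalues of the square matrix M, counted with algebraic
   multiplicity, in nondecreasing order. Then s`_1 is the second smallest
   eigenvalue lambda_2. *)
Definition sorted_eigenvalues (m : nat) (M : 'M[R]_m) (s : seq R) : Prop :=
  sorted <=%R s /\ char_poly M = \prod_(x <- s) ('X - x%:P).

Definition boundary_weight (n : nat) (A : 'I_n -> 'I_n -> R) (C : {set 'I_n}) : R :=
  \sum_(i in C) \sum_(j in ~: C) A i j.

End Defs.

(* Replacing the minimiser on C by the constant vector wbar yields a competitor
   whose objective differs only by the loss on C (at most epsC) and by the
   boundary edges (each contributing at most 2 (|wbar|^2 + R^2)); minimality thus
   bounds the total variation of what inside C.  Coordinatewise, the deviations
   from the cluster mean are orthogonal to the all-ones vector, which lies in the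
   kernel of the Laplacian of G^(C); as lambda_2 > 0 no other eigenvalue is below
   lambda_2, so the Laplacian quadratic form, which is that total variation,
   dominates lambda_2 times their squared norm.  This Rayleigh bound is derived
   from the spectral theorem for Hermitian complex matrices. *)

From HB Require Import structures.
From mathcomp Require Import all_boot all_order all_algebra.
From mathcomp Require Import reals.
From mathcomp Require Import sesquilinear spectral complex.
From mathcomp Require Import ring lra.
Set Implicit Arguments. Unset Strict Implicit. Unset Printing Implicit Defensive.
Import Order.TTheory GRing.Theory Num.Theory.
Local Open Scope ring_scope.

Lemma char_poly_similar (F : fieldType) n (P B : 'M[F]_n) : P \in unitmx ->
  char_poly (invmx P *m B *m P) = char_poly B.
Proof.
move=> Pu; rewrite /char_poly /char_poly_mx.
have PV1 : map_mx polyC (invmx P) *m map_mx polyC P = 1%:M.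
  by rewrite -map_mxM mulVmx // map_mx1.
have XE : ('X%:M : 'M[{poly F}]_n) = map_mx polyC (invmx P) *m 'X%:M *m map_mx polyC P.
  by rewrite mul_mx_scalar -scalemxAl PV1 scalemx1.
rewrite {1}XE !map_mxM -mulmxBl -mulmxBr !det_mulmx !det_map_mx mulrC mulrA.
by rewrite -rmorphM /= -det_mulmx mulmxV // det1 rmorph1 mul1r.
Qed.

Section HermitianForm.
Local Open Scope sesquilinear_scope.
Variable C : numClosedFieldType.

Lemma cV_dotE m (a b : 'cV[C]_m) :
  (a ^t* *m b) 0 0 = \sum_k (a k 0)^* * b k 0.
Proof. by rewrite mxE; apply: eq_bigr => k _; rewrite !mxE. Qed.

Lemma spectral_diag_perm_eq m (M : 'M[C]_m) (lam : seq C) :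
  M \is normalmx -> char_poly M = \prod_(x <- lam) ('X - x%:P) ->
  perm_eq [seq spectral_diag M 0 k | k <- enum 'I_m] lam.
Proof.
move=> /orthomx_spectralP EM charM; apply: prod_XsubC_eq.
rewrite big_map big_enum /= -charM.
set D := spectral_diag M; set P := spectralmx M in EM *.
rewrite [in RHS]EM char_poly_similar ?spectral_unit //.
rewrite char_poly_trig ?diag_mx_is_trig //.
by apply: eq_bigr => k _; rewrite !mxE eqxx mulr1n.
Qed.

Lemma diag_form_gap m (D : 'rV[C]_m) (z : 'cV[C]_m) (l2 : C) (k0 : 'I_m) :
  (forall k, k != k0 -> l2 <= D 0 k) -> z k0 0 = 0 ->
  l2 * (z ^t* *m z) 0 0 <= (z ^t* *m diag_mx D *m z) 0 0.
Proof.
move=> Dge zk0; rewrite cV_dotE mul_mx_diag mxE mulr_sumr.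
apply: ler_sum => k _; rewrite !mxE.
have [->|nk] := eqVneq k k0; first by rewrite zk0 !mulr0.
rewrite [X in _ <= X]mulrAC [X in X <= _]mulrC.
by apply: ler_wpM2l; [rewrite mulrC mul_conjC_ge0 | exact: Dge].
Qed.

Lemma diag_kernel_gap m (D : 'rV[C]_m) (l2 : C) (w : 'cV[C]_m) :
  0 < l2 -> (#|[pred k | ~~ (l2 <= D 0 k)%R]| <= 1)%N ->
  w != 0 -> diag_mx D *m w = 0 ->
  exists2 k0, w k0 0 != 0 & forall k, k != k0 -> l2 <= D 0 k /\ w k 0 = 0.
Proof.
move=> l2_gt0 small_le1 /matrix0Pn [k0 [j wk0]] Dw0; rewrite [j]ord1 in wk0.
have Dw k : D 0 k * w k 0 = 0 by move/matrixP/(_ k 0): Dw0; rewrite mul_diag_mx !mxE.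
have Dk0 : D 0 k0 = 0.
  by apply/eqP; move: (Dw k0) => /eqP; rewrite mulf_eq0 (negPf wk0) orbF.
have k0_small : k0 \in [pred k | ~~ (l2 <= D 0 k)%R].
  by rewrite inE Dk0 (lt_geF l2_gt0).
exists k0 => // k nk; have Dk : l2 <= D 0 k.
  apply: contraNT nk => small.
  by have := card_le1P small_le1 k0 k0_small k; rewrite !inE small => <-.
split=> //; apply/eqP; move: (Dw k) => /eqP; rewrite mulf_eq0.
by rewrite (gt_eqF (lt_le_trans l2_gt0 Dk)).
Qed.

(* Since [M u = 0] with [u != 0], the one eigenvalue below [l2] is [0] and its
   eigenvector direction is [u]; [y] is orthogonal to it. *)
Lemma hermitian_form_gap m (M : 'M[C]_m) (lam : seq C) (l2 : C) (u y : 'cV[C]_m) :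
  M \is hermsymmx -> char_poly M = \prod_(x <- lam) ('X - x%:P) ->
  0 < l2 -> (count (fun x => ~~ (l2 <= x)%R) lam <= 1)%N ->
  M *m u = 0 -> u != 0 -> u ^t* *m y = 0 ->
  l2 * (y ^t* *m y) 0 0 <= (y ^t* *m M *m y) 0 0.
Proof.
move=> /hermitian_normalmx Mnormal charM l2_gt0 few_small Mu u_neq0 uy.
have EM := orthomx_spectralP Mnormal.
set D := spectral_diag M in EM; set P := spectralmx M in EM.
have P_unitary : P \is unitarymx := spectral_unitarymx M.
have P_unit : P \in unitmx := spectral_unit M.
have PtP : P ^t* *m P = 1%:M by rewrite -invmx_unitary // mulVmx.
have small_le1 : (#|[pred k | ~~ (l2 <= D 0 k)%R]| <= 1)%N.
  move: few_small; rewrite -(permP (spectral_diag_perm_eq Mnormal charM)) count_map.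
  by rewrite cardE /enum_mem size_filter filter_predT.
have [k0 wk0 k0_only] : exists2 k0, (P *m u) k0 0 != 0 &
    forall k, k != k0 -> l2 <= D 0 k /\ (P *m u) k 0 = 0.
  apply: diag_kernel_gap l2_gt0 small_le1 _ _.
    by apply: contraNneq u_neq0 => Pu0; rewrite -(mulKmx P_unit u) Pu0 mulmx0.
  have PM : P *m M = diag_mx D *m P by rewrite {1}EM !mulmxA mulmxV // mul1mx.
  by rewrite mulmxA -PM -mulmxA Mu mulmx0.
set z := P *m y.
have zk0 : z k0 0 = 0.
  have : (P *m u) ^t* *m z = 0.
    by rewrite trmx_mul map_mxM -mulmxA (mulmxA _ P) PtP mul1mx.
  move/matrixP/(_ 0 0); rewrite cV_dotE mxE (bigD1 k0) //= big1 ?addr0.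
    by move/eqP; rewrite mulf_eq0 conjC_eq0 (negPf wk0) => /eqP.
  by move=> k /k0_only [_ ->]; rewrite conjC0 mul0r.
have -> : y ^t* *m M *m y = z ^t* *m diag_mx D *m z.
  by rewrite [in LHS]EM invmx_unitary // /z trmx_mul map_mxM !mulmxA.
have -> : y ^t* *m y = z ^t* *m z.
  by rewrite /z trmx_mul map_mxM -!mulmxA (mulmxA _ P) PtP mul1mx.
by apply: diag_form_gap zk0 => k /k0_only [].
Qed.

End HermitianForm.

Lemma sorted_count_lt_nth1 (R : realDomainType) (s : seq R) :
  sorted <=%R s -> (count (fun x => ~~ (s`_1 <= x)%R) s <= 1)%N.
Proof.
case: s => [|a [|b s]] /=; [by [] | by rewrite addn0 leq_b1 | move=> /andP[_ path_b]].
rewrite lexx /= add0n.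
have /allP b_le := order_path_min (@le_trans _ R) path_b.
rewrite (eq_in_count (a2 := pred0)) ?count_pred0 ?addn0 ?leq_b1 //.
by move=> x /b_le ->.
Qed.

Section SymmetricForm.
Local Open Scope sesquilinear_scope.
Variable R : realType.

Lemma symmetric_form_gap m (M : 'M[R]_m) (lam : seq R) (u y : 'cV[R]_m) :
  M^T = M -> sorted_eigenvalues M lam -> 0 < lam`_1 ->
  M *m u = 0 -> u != 0 -> u^T *m y = 0 ->
  lam`_1 * (y^T *m y) 0 0 <= (y^T *m M *m y) 0 0.
Proof.
move=> MT [lam_sorted charM] lam1_gt0 Mu u_neq0 uy.
pose f := real_complex R.
have conj_f x : (f x)^* = f x by apply/conj_Creal/complex_realP; exists x.
have trC_f m' n' (N : 'M[R]_(m', n')) : (map_mx f N) ^t* = map_mx f N^T.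
  by apply/matrixP => i j; rewrite !mxE conj_f.
have f00 (N : 'M[R]_1) : (map_mx f N) 0 0 = f (N 0 0) by rewrite mxE.
have := hermitian_form_gap (M := map_mx f M) (lam := map f lam) (l2 := f lam`_1)
  (u := map_mx f u) (y := map_mx f y).
rewrite !trC_f -!map_mxM !f00 -rmorphM lecR; apply.
- apply: realsym_hermsym; last first.
    by apply/mxOverP => i j; rewrite mxE; apply/complex_realP; exists (M i j).
  by rewrite qualifE /= expr0 scale1r map_mx_id // map_trmx MT.
- rewrite -map_char_poly charM rmorph_prod big_map; apply: eq_bigr => x _.
  by rewrite rmorphB /= map_polyX map_polyC.
- by rewrite ltcR.
- rewrite count_map (eq_count (a2 := fun x => ~~ (lam`_1 <= x)%R)).
    exact: sorted_count_lt_nth1.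
  by move=> x /=; rewrite lecR.
- by rewrite Mu map_mx0.
- by rewrite map_mx_eq0.
- by rewrite uy map_mx0.
Qed.

End SymmetricForm.

Section Laplacian.
Variable R : comNzRingType.

Lemma cV_formE m (M : 'M[R]_m) (y : 'cV[R]_m) :
  (y^T *m M *m y) 0 0 = \sum_a \sum_b y a 0 * M a b * y b 0.
Proof.
rewrite mxE exchange_big; apply: eq_bigr => b _; rewrite mxE mulr_suml.
by apply: eq_bigr => a _; rewrite !mxE.
Qed.

Definition laplacian m (B : 'I_m -> 'I_m -> R) : 'M[R]_m :=
  diag_mx (\row_a \sum_b B a b) - \matrix_(a, b) B a b.

Variables (m : nat) (B : 'I_m -> 'I_m -> R).
Hypothesis B_sym : forall a b, B a b = B b a.

Lemma tr_laplacian : (laplacian B)^T = laplacian B.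
Proof.
rewrite /laplacian linearB /= tr_diag_mx; congr (_ - _).
by apply/matrixP => a b; rewrite !mxE B_sym.
Qed.

Lemma laplacian_const1 : laplacian B *m (const_mx 1 : 'cV_m) = 0.
Proof.
apply/matrixP => a j; rewrite mulmxBl mul_diag_mx !mxE mulr1.
by under [X in _ - X]eq_bigr do rewrite !mxE mulr1; rewrite subrr.
Qed.

Lemma laplacian_formE (y : 'cV[R]_m) :
  (y^T *m laplacian B *m y) 0 0 = \sum_a \sum_b B a b * (y a 0 ^+ 2 - y a 0 * y b 0).
Proof.
rewrite cV_formE; apply: eq_bigr => a _.
under eq_bigr => b _ do rewrite !mxE mulrBr mulrBl mulrnAr mulrnAl mulrb eq_sym.
rewrite sumrB -big_mkcond big_pred1_eq mulr_sumr mulr_suml -sumrB.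
by apply: eq_bigr => b _; ring.
Qed.

Lemma laplacian_form2E (y : 'cV[R]_m) :
  2 * (y^T *m laplacian B *m y) 0 0 = \sum_a \sum_b B a b * (y a 0 - y b 0) ^+ 2.
Proof.
rewrite laplacian_formE mulr2n mulrDl mul1r {2}exchange_big -big_split /=.
apply: eq_bigr => a _; rewrite -big_split /=; apply: eq_bigr => b _.
by rewrite B_sym; ring.
Qed.

End Laplacian.

Section SquaredNorm.
Variable R : realType.

Lemma sqnorm_ge0 d (v : 'rV[R]_d) : 0 <= sqnorm v.
Proof. by apply: sumr_ge0 => k _; rewrite sqr_ge0. Qed.

Lemma sqnorm0 d : sqnorm (0 : 'rV[R]_d) = 0.
Proof. by apply: big1 => k _; rewrite mxE expr0n. Qed.

Lemma sqnormBC d (a b : 'rV[R]_d) : sqnorm (a - b) = sqnorm (b - a).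
Proof. by apply: eq_bigr => k _; rewrite !mxE; ring. Qed.

Lemma sqnormB_le d (a b : 'rV[R]_d) : sqnorm (a - b) <= 2 * (sqnorm a + sqnorm b).
Proof.
rewrite /sqnorm -big_split mulr_sumr /=; apply: ler_sum => k _; rewrite !mxE.
by rewrite -subr_ge0 (_ : _ - _ = (a 0 k + b 0 k) ^+ 2) ?sqr_ge0 //; ring.
Qed.

Lemma sqnorm_le_sqr d (v : 'rV[R]_d) (r : R) : norm2 v <= r -> sqnorm v <= r ^+ 2.
Proof.
move=> v_le_r; have r_ge0 : 0 <= r := le_trans (sqrtr_ge0 _) v_le_r.
by rewrite -(sqr_sqrtr (sqnorm_ge0 v)) ler_sqr ?nnegrE ?sqrtr_ge0.
Qed.

End SquaredNorm.

Lemma laplacian_poincare (R : realType) m d (B : 'I_m -> 'I_m -> R) (lam : seq R)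
    (x : 'I_m -> 'rV[R]_d) :
  (forall a b, B a b = B b a) -> sorted_eigenvalues (laplacian B) lam ->
  0 < lam`_1 -> \sum_a x a = 0 ->
  2 * lam`_1 * \sum_a sqnorm (x a) <= \sum_a \sum_b B a b * sqnorm (x a - x b).
Proof.
case: m B x => [|m] B x B_sym eig lam1_gt0 x_sum0.
  by rewrite !big_ord0 mulr0.
pose y k : 'cV[R]_m.+1 := \col_a x a 0 k.
have one_neq0 : (const_mx 1 : 'cV[R]_m.+1) != 0.
  by apply/eqP => /matrixP/(_ 0 0); rewrite !mxE => /eqP; rewrite oner_eq0.
have y_perp k : (const_mx 1 : 'cV_m.+1)^T *m y k = 0.
  apply/matrixP => i j; rewrite !mxE; under eq_bigr do rewrite !mxE mul1r.
  by rewrite -summxE x_sum0 mxE.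
have normE : \sum_a sqnorm (x a) = \sum_k ((y k)^T *m y k) 0 0.
  rewrite exchange_big; apply: eq_bigr => k _; rewrite mxE.
  by apply: eq_bigr => a _; rewrite !mxE expr2.
have energyE : \sum_a \sum_b B a b * sqnorm (x a - x b)
    = \sum_k 2 * ((y k)^T *m laplacian B *m y k) 0 0.
  under [RHS]eq_bigr do rewrite laplacian_form2E //.
  rewrite [RHS]exchange_big; apply: eq_bigr => a _; rewrite [RHS]exchange_big.
  apply: eq_bigr => b _; rewrite mulr_sumr; apply: eq_bigr => k _.
  by rewrite !mxE.
rewrite normE energyE mulr_sumr; apply: ler_sum => k _; rewrite -mulrA ler_pM2l //.
exact: symmetric_form_gap (tr_laplacian B_sym) eig lam1_gt0 (laplacian_const1 B)
  one_neq0 (y_perp k).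
Qed.

Lemma sum_splitC (R : nmodType) n (C : {set 'I_n}) (F : 'I_n -> R) :
  \sum_i F i = \sum_(i in C) F i + \sum_(i in ~: C) F i.
Proof.
by rewrite (bigID (mem C)) /=; congr (_ + _); apply: eq_bigl => i; rewrite in_setC.
Qed.

Section PairSums.
Variables (R : comNzRingType) (n : nat) (g : 'I_n -> 'I_n -> R).
Hypothesis g_sym : forall i j, g i j = g j i.

Lemma sum_pairs_ltn : (forall i, g i i = 0) ->
  \sum_i \sum_j g i j = 2 * \sum_(i < n) \sum_(j < n | (i < j)%N) g i j.
Proof.
move=> g_diag.
have split_ij i j : g i j = ((i < j)%N)%:R * g i j + ((j < i)%N)%:R * g j i.
  case: ltngtP => [_|_|/val_inj ->];
    by rewrite ?g_diag ?mul1r ?mul0r ?addr0 ?add0r // g_sym.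
under eq_bigr => i _ do under eq_bigr => j _ do rewrite split_ij.
under eq_bigr do rewrite big_split /=.
rewrite big_split /= [X in _ + X]exchange_big /= mulr_natl mulr2n.
suff -> : \sum_(i < n) \sum_(j < n | (i < j)%N) g i j
    = \sum_(i < n) \sum_(j < n) ((i < j)%N)%:R * g i j by [].
apply: eq_bigr => i _; rewrite big_mkcond; apply: eq_bigr => j _.
by rewrite mulr_natl mulrb.
Qed.

Lemma sum_pairs_cluster (C : {set 'I_n}) :
  \sum_i \sum_j g i j = \sum_(i in C) \sum_(j in C) g i j
    + 2 * \sum_(i in C) \sum_(j in ~: C) g i j + \sum_(i in ~: C) \sum_(j in ~: C) g i j.
Proof.
rewrite (sum_splitC C); under eq_bigr do rewrite (sum_splitC C).
under [X in _ + X]eq_bigr do rewrite (sum_splitC C).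
rewrite !big_split /= [X in _ + (X + _)]exchange_big /=.
under [X in _ + (X + _)]eq_bigr do under eq_bigr do rewrite g_sym.
by rewrite mulr_natl mulr2n !addrA.
Qed.

End PairSums.

Section GTVMin.
Variables (R : realType) (n d : nat) (A : 'I_n -> 'I_n -> R).
Variables (L : 'I_n -> 'rV[R]_d -> R) (alpha : R).
Hypothesis A_graph : weighted_graph A.

Lemma gtv_objective_pairs (w : 'I_n -> 'rV[R]_d) :
  2 * gtv_objective A L alpha w
  = 2 * \sum_i L i (w i) + alpha * \sum_i \sum_j A i j * sqnorm (w i - w j).
Proof.
have [A_sym [A_diag _]] := A_graph.
rewrite /gtv_objective mulrDr mulrCA.
rewrite (sum_pairs_ltn (g := fun i j => A i j * sqnorm (w i - w j))) //.
- by move=> i j; rewrite A_sym sqnormBC.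
- by move=> i; rewrite A_diag mul0r.
Qed.

Lemma gtvmin_cluster_variation_le (what : 'I_n -> 'rV[R]_d) (C : {set 'I_n})
    (wbar : 'rV[R]_d) (epsC Rb : R) :
  (forall i v, 0 <= L i v) -> 0 < alpha -> is_gtvmin_solution A L alpha what ->
  \sum_(i in C) L i wbar <= epsC ->
  (forall i, i \notin C -> norm2 (what i) <= Rb) ->
  alpha * \sum_(i in C) \sum_(j in C) A i j * sqnorm (what i - what j)
  <= 2 * (epsC + 2 * alpha * boundary_weight A C * (sqnorm wbar + Rb ^+ 2)).
Proof.
move=> L_ge0 alpha_gt0 what_min L_wbar what_le_Rb.
have [A_sym [_ A_ge0]] := A_graph.
pose w' i := if i \in C then wbar else what i.
pose g (w : 'I_n -> 'rV[R]_d) i j := A i j * sqnorm (w i - w j).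
have g_sym w i j : g w i j = g w j i by rewrite /g A_sym sqnormBC.
have := what_min w'; rewrite -(ler_pM2l (_ : 0 < 2)) // !gtv_objective_pairs.
rewrite !(sum_splitC C (fun i => L i _)) !(sum_pairs_cluster (g_sym _) C).
have inC_w' : \sum_(i in C) \sum_(j in C) g w' i j = 0.
  by apply: big1 => i iC; apply: big1 => j jC; rewrite /g /w' iC jC subrr sqnorm0 mulr0.
have outC_w' : \sum_(i in ~: C) \sum_(j in ~: C) g w' i j
    = \sum_(i in ~: C) \sum_(j in ~: C) g what i j.
  by apply: eq_bigr => i; rewrite in_setC => /negPf iC; apply: eq_bigr => j;
    rewrite in_setC => /negPf jC; rewrite /g /w' iC jC.
have L_outC : \sum_(i in ~: C) L i (w' i) = \sum_(i in ~: C) L i (what i).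
  by apply: eq_bigr => i; rewrite in_setC /w' => /negPf ->.
have L_inC : \sum_(i in C) L i (w' i) = \sum_(i in C) L i wbar.
  by apply: eq_bigr => i; rewrite /w' => ->.
have bd_w' : \sum_(i in C) \sum_(j in ~: C) g w' i j
    <= boundary_weight A C * (2 * (sqnorm wbar + Rb ^+ 2)).
  rewrite mulr_suml; apply: ler_sum => i iC; rewrite mulr_suml; apply: ler_sum => j.
  rewrite in_setC => jC; rewrite /g /w' iC (negPf jC); apply: ler_wpM2l => //.
  apply: le_trans (sqnormB_le _ _) _.
  by rewrite ler_pM2l // lerD2l sqnorm_le_sqr ?what_le_Rb.
have bd_what : 0 <= \sum_(i in C) \sum_(j in ~: C) g what i j.
  by do 2![apply: sumr_ge0 => ? _]; rewrite mulr_ge0 ?sqnorm_ge0.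
have L_ge0C : 0 <= \sum_(i in C) L i (what i) by apply: sumr_ge0.
rewrite inC_w' outC_w' L_outC L_inC.
have := ler_wpM2l (ltW alpha_gt0) bd_w'.
have := mulr_ge0 (ltW alpha_gt0) bd_what.
rewrite /g; set S := sqnorm wbar + Rb ^+ 2; set B := boundary_weight A C.
nra.
Qed.

End GTVMin.

Lemma laplacian_inducedE (R : realType) n (A : 'I_n -> 'I_n -> R) (C : {set 'I_n}) :
  (forall i, A i i = 0) ->
  laplacian_induced A C = laplacian (fun a b : 'I_#|C| => A (enum_val a) (enum_val b)).
Proof.
move=> A_diag; apply/matrixP => a b; rewrite !mxE.
by case: eqP => [->|_]; rewrite ?A_diag ?mulr1n ?mulr0n ?subr0 ?sub0r // big_enum_val.
Qed.

Theorem theorem1 (R : realType) (n d : nat) (A : 'I_n -> 'I_n -> R)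
  (L : 'I_n -> 'rV[R]_d -> R) (alpha : R) (what : 'I_n -> 'rV[R]_d)
  (C : {set 'I_n}) (wbar : 'rV[R]_d) (epsC : R) (lam : seq R) (Rb : R) :
  weighted_graph A ->
  (forall i v, 0 <= L i v) ->
  0 < alpha ->
  is_gtvmin_solution A L alpha what ->
  C != set0 ->
  0 <= epsC ->
  \sum_(i in C) L i wbar <= epsC ->
  sorted_eigenvalues (laplacian_induced A C) lam ->
  0 < lam`_1 ->
  0 <= Rb ->
  (forall i, i \notin C -> norm2 (what i) <= Rb) ->
  \sum_(i in C)
      sqnorm (what i - (#|C|%:R)^-1 *: \sum_(i' in C) what i')
  <= (alpha * lam`_1)^-1
     * (epsC + 2 * alpha * boundary_weight A C * (sqnorm wbar + Rb ^+ 2)).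
Proof.
move=> A_graph L_ge0 alpha_gt0 what_min C_neq0 _ L_wbar eig lam1_gt0 _ what_le_Rb.
have [A_sym [A_diag _]] := A_graph.
rewrite laplacian_inducedE // in eig.
set mean := _ *: _.
pose x (a : 'I_#|C|) := what (enum_val a) - mean.
have x_sum0 : \sum_a x a = 0.
  have C_gt0 : (0 < #|C|)%N by rewrite card_gt0.
  rewrite sumrB -big_enum_val sumr_const card_ord /mean -scaler_nat scalerA.
  by rewrite mulfV ?pnatr_eq0 -?lt0n // scale1r subrr.
have normE : \sum_(i in C) sqnorm (what i - mean) = \sum_a sqnorm (x a).
  by rewrite big_enum_val.
have tvE : \sum_(i in C) \sum_(j in C) A i j * sqnorm (what i - what j)
    = \sum_a \sum_b A (enum_val a) (enum_val b) * sqnorm (x a - x b).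
  rewrite big_enum_val; apply: eq_bigr => a _; rewrite big_enum_val.
  by apply: eq_bigr => b _; rewrite /x opprB addrA subrK.
have gap := laplacian_poincare (fun a b => A_sym _ _) eig lam1_gt0 x_sum0.
have := gtvmin_cluster_variation_le A_graph L_ge0 alpha_gt0 what_min L_wbar what_le_Rb.
rewrite tvE normE ler_pdivlMl ?mulr_gt0 //.
have := ler_wpM2l (ltW alpha_gt0) gap.
lra.
Qed.
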